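(* (Darboux transformation.) Let $(\Omega(\mathcal{A}),\mathrm{d},\bar{\mathrm{d}})$ be a bidifferential graded algebra and let $\phi\in\mathcal{A}$ satisfy $\bar{\mathrm{d}}\,\mathrm{d}\,\phi=(\mathrm{d}\phi)(\mathrm{d}\phi)$. Let $\Delta'\in\mathcal{A}$ satisfy $\bar{\mathrm{d}}\Delta'=(\mathrm{d}\Delta')\Delta'$, let $\theta\in\mathcal{A}$ be invertible with $$\bar{\mathrm{d}}\theta=(\mathrm{d}\phi)\,\theta+(\mathrm{d}\theta)\,\Delta',$$ and let $C'\in\mathcal{A}$ with $\mathrm{d}C'=0$. Set $\phi':=\phi+\theta\Delta'\theta^{-1}-C'$. Then $$\bar{\mathrm{d}}(\theta\Delta'\theta^{-1})=(\mathrm{d}\phi')\,\theta\Delta'\theta^{-1}-\theta\Delta'\theta^{-1}\,\mathrm{d}\phi,$$ and $\phi'$ satisfies $\bar{\mathrm{d}}\,\mathrm{d}\,\phi'=(\mathrm{d}\phi')(\mathrm{d}\phi')$.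
   Context: $\mathcal{A}$ is a unital associative algebra over $\mathbb{C}$ with identity $I$. A bidifferential graded algebra $(\Omega(\mathcal{A}),\mathrm{d},\bar{\mathrm{d}})$ consists of a graded associative algebra $\Omega(\mathcal{A})=\bigoplus_{r\ge 0}\Omega^r(\mathcal{A})$ with $\Omega^0(\mathcal{A})=\mathcal{A}$ (each $\Omega^r(\mathcal{A})$ an $\mathcal{A}$-bimodule) together with two linear maps $\mathrm{d},\bar{\mathrm{d}}:\Omega^r(\mathcal{A})\to\Omega^{r+1}(\mathcal{A})$ satisfying the graded Leibniz rule $\mathrm{d}(\alpha\beta)=(\mathrm{d}\alpha)\beta+(-1)^r\alpha\,\mathrm{d}\beta$ for $\alpha\in\Omega^r(\mathcal{A})$ (and likewise for $\bar{\mathrm{d}}$), and $\mathrm{d}^2=\bar{\mathrm{d}}^2=0$, $\mathrm{d}\bar{\mathrm{d}}+\bar{\mathrm{d}}\mathrm{d}=0$. *)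

From HB Require Import structures.
From mathcomp Require Import all_boot all_order all_algebra.
Set Implicit Arguments. Unset Strict Implicit. Unset Printing Implicit Defensive.
Import Order.TTheory GRing.Theory Num.Theory.
Local Open Scope ring_scope.

(* A graded associative algebra Omega = (+)_{r>=0} Omega^r is represented by
   its total algebra [Om] (an associative unital K-algebra) together with the
   predicates [deg r] cutting out the homogeneous components Omega^r.
   Omega^0 = A is [deg 0].  The derivations d, dbar are the linear
   extensions of the maps Omega^r -> Omega^{r+1}. *)
Record bidga (K : fieldType) (Om : algType K) := BiDGA {
  deg : nat -> Om -> Prop;
  deg0 : forall r, deg r 0;
  degD : forall r x y, deg r x -> deg r y -> deg r (x + y);
  degZ : forall r (a : K) x, deg r x -> deg r (a *: x);
  degM : forall r s x y, deg r x -> deg s y -> deg (r + s)%N (x * y);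
  deg1 : deg 0 1;
  deg_span : forall x, exists (n : nat) (f : nat -> Om),
      (forall i, deg i (f i)) /\ x = \sum_(i < n) f i;
  deg_direct : forall (n : nat) (f : nat -> Om), (forall i, deg i (f i)) ->
      \sum_(i < n) f i = 0 -> forall i, (i < n)%N -> f i = 0;
  d : Om -> Om;
  db : Om -> Om;
  dD : forall x y, d (x + y) = d x + d y;
  dZ : forall (a : K) x, d (a *: x) = a *: d x;
  dbD : forall x y, db (x + y) = db x + db y;
  dbZ : forall (a : K) x, db (a *: x) = a *: db x;
  d_deg : forall r x, deg r x -> deg r.+1 (d x);
  db_deg : forall r x, deg r x -> deg r.+1 (db x);
  d_leibniz : forall r s x y, deg r x -> deg s y ->
      d (x * y) = d x * y + (-1) ^+ r *: (x * d y);
  db_leibniz : forall r s x y, deg r x -> deg s y ->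
      db (x * y) = db x * y + (-1) ^+ r *: (x * db y);
  dd : forall x, d (d x) = 0;
  dbdb : forall x, db (db x) = 0;
  d_db_anti : forall x, d (db x) + db (d x) = 0
}.

From HB Require Import structures.
From mathcomp Require Import all_boot all_order all_algebra.
Import GRing.Theory.
Local Open Scope ring_scope.
Set Implicit Arguments. Unset Strict Implicit.

(* Write a := d phi, X := theta Dp theta^-1 and phi' := phi + X - Cp, so that
   d phi' = a + d X because d Cp = 0.  The proof splits into two facts.
   1. (Conjugation.)  Using the Leibniz rule in degree 0, the rule
      D(theta^-1) = - theta^-1 (D theta) theta^-1 (valid for D = d, db), and
      the hypotheses on db theta and db Dp, one computes
      db X = (a + d X) X - X a; this is the first claim.
   2. (Gauge lemma.)  Whenever a is a d-closed 1-form with db a = a a and a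
      0-form X satisfies db X = (a + d X) X - X a, the 1-form a + d X again
      satisfies db b = b b.  This uses only db d = - d db, d d = 0 and the
      graded Leibniz rule in degrees 0 and 1.
   The theorem follows by applying 2 to a = d phi and the X of step 1. *)

Section BidgaCalculus.
Variables (K : fieldType) (Om : algType K) (B : bidga Om).
Implicit Types x y : Om.

Lemma dN x : d B (- x) = - d B x.
Proof. by rewrite -scaleN1r dZ scaleN1r. Qed.

Lemma dB x y : d B (x - y) = d B x - d B y.
Proof. by rewrite dD dN. Qed.

Lemma dM0 s x y : deg B 0 x -> deg B s y -> d B (x * y) = d B x * y + x * d B y.
Proof. by move=> hx hy; rewrite (d_leibniz hx hy) expr0 scale1r. Qed.

Lemma dbM0 s x y : deg B 0 x -> deg B s y -> db B (x * y) = db B x * y + x * db B y.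
Proof. by move=> hx hy; rewrite (db_leibniz hx hy) expr0 scale1r. Qed.

Lemma dM1 s x y : deg B 1 x -> deg B s y -> d B (x * y) = d B x * y - x * d B y.
Proof. by move=> hx hy; rewrite (d_leibniz hx hy) expr1 scaleN1r. Qed.

(* Both differentials kill the unit, since D 1 = D (1 * 1) = D 1 + D 1. *)
Lemma d1 : d B 1 = 0.
Proof.
apply: (addrI (d B 1)); rewrite addr0.
by have := dM0 (deg1 B) (deg1 B); rewrite !mulr1 !mul1r => <-.
Qed.

Lemma db1 : db B 1 = 0.
Proof.
apply: (addrI (db B 1)); rewrite addr0.
by have := dbM0 (deg1 B) (deg1 B); rewrite !mulr1 !mul1r => <-.
Qed.

Lemma deriv_inv (D : Om -> Om) (theta thinv : Om) :
  theta * thinv = 1 -> thinv * theta = 1 -> D 1 = 0 ->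
  D (theta * thinv) = D theta * thinv + theta * D thinv ->
  D thinv = - (thinv * D theta * thinv).
Proof.
move=> hTTi hTiT hD1; rewrite hTTi hD1 => /esym/eqP; rewrite addrC addr_eq0 => /eqP E.
by rewrite -[D thinv]mul1r -hTiT -mulrA E mulrN !mulrA.
Qed.

Lemma gauge_solution (a X : Om) :
  deg B 1 a -> deg B 0 X -> d B a = 0 -> db B a = a * a ->
  db B X = (a + d B X) * X - X * a ->
  db B (a + d B X) = (a + d B X) * (a + d B X).
Proof.
move=> ha hX hda hdba hdbX.
have hb : deg B 1 (a + d B X) by apply: degD => //; exact: d_deg.
have db_dX : db B (d B X) = - d B (db B X).
  by apply/eqP; rewrite -addr_eq0 addrC d_db_anti.
have d_b : d B (a + d B X) = 0 by rewrite dD hda dd addr0.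
rewrite dbD db_dX hdbX hdba dB (dM1 hb hX) (dM0 hX ha) d_b hda.
rewrite mul0r mulr0 sub0r addr0 opprB opprK !(mulrDl, mulrDr) !addrA.
by rewrite -(addrA (a * a)) (addrC (d B X * a)) !addrA.
Qed.

Lemma darboux_conjugate (a Dp theta thinv : Om) :
  deg B 0 Dp -> db B Dp = d B Dp * Dp ->
  deg B 0 theta -> deg B 0 thinv -> theta * thinv = 1 -> thinv * theta = 1 ->
  db B theta = a * theta + d B theta * Dp ->
  let X := theta * Dp * thinv in
  db B X = (a + d B X) * X - X * a.
Proof.
move=> hD hdbD hT hTi hTTi hTiT hdbT X.
have hTD : deg B 0 (theta * Dp) by exact: (degM hT hD).
have d_inv := deriv_inv hTTi hTiT d1 (dM0 hT hTi).
have db_inv := deriv_inv hTTi hTiT db1 (dbM0 hT hTi).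
have dX : d B X = d B theta * Dp * thinv + theta * d B Dp * thinv
                  - X * d B theta * thinv.
  by rewrite /X (dM0 hTD hTi) (dM0 hT hD) d_inv !mulrDl !mulrN !mulrA.
rewrite /X (dbM0 hTD hTi) (dbM0 hT hD) db_inv hdbT hdbD dX /X.
rewrite !(mulrDl, mulrDr, mulrBl, mulrBr, mulrN, mulNr, opprD, opprK, mulrA).
rewrite -!(mulrA _ thinv theta) !hTiT !mulr1 -!(mulrA _ theta thinv) !hTTi !mulr1.
by rewrite !addrA addrAC.
Qed.

End BidgaCalculus.

Theorem mainTheorem4 (K : fieldType) (Om : algType K) (B : bidga Om)
    (phi Dp theta thinv Cp : Om) :
  deg B 0 phi ->
  db B (d B phi) = d B phi * d B phi ->
  deg B 0 Dp ->
  db B Dp = d B Dp * Dp ->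
  deg B 0 theta -> deg B 0 thinv -> theta * thinv = 1 -> thinv * theta = 1 ->
  db B theta = d B phi * theta + d B theta * Dp ->
  deg B 0 Cp ->
  d B Cp = 0 ->
  let phi' := phi + theta * Dp * thinv - Cp in
  db B (theta * Dp * thinv) = d B phi' * (theta * Dp * thinv) - theta * Dp * thinv * d B phi
  /\ db B (d B phi') = d B phi' * d B phi'.
Proof.
move=> hp hdbp hD hdbD hT hTi hTTi hTiT hdbT _ hdC phi'.
have hX : deg B 0 (theta * Dp * thinv) by exact: (degM (degM hT hD) hTi).
have d_phi' : d B phi' = d B phi + d B (theta * Dp * thinv).
  by rewrite /phi' dB hdC subr0 dD.
have conj := darboux_conjugate hD hdbD hT hTi hTTi hTiT hdbT.
rewrite d_phi'; split => //.
by apply: gauge_solution => //; [exact: d_deg | exact: dd].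
Qed.
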